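(* Let $n\ge 6$ be even, and let $d_*=(\epsilon_1,\dots,\epsilon_{n-1},h)$ and $d_*'=(\epsilon_1',\dots,\epsilon_{n-1}',h')$ be neighbors with $d_*\ne d_*'$. Then for all $j_1,j_2$ with $1\le j_1\le j_2\le n-1$, \[\left|\sum_{j=j_1}^{j_2}(\epsilon'_j-\epsilon_j)\right|\le 2.\] Further, $|h-h'|\le 2$, or $|h|=\frac n2-1$ and $h'=-h$.
   Context: Symbols are $[1,n]$; $\mathrm{dist}(a,b)$ is the minimum of the residues of $a-b$ and $b-a$ mod $n$ (in $[0,n-1]$). A Latin row is a permutation $(s_1,\dots,s_n)$ of $[1,n]$. Its extended difference row is $(\epsilon_1,\dots,\epsilon_{n-1},h)$ where, with $h_j\in[0,n-1]$, $h_j\equiv s_{j+1}-s_j\pmod n$ ($1\le j\le n-1$), $h_n\equiv s_1-s_n\pmod n$, one sets $\epsilon_j=h_j-\frac n2$, $h=h_n-\frac n2$ (integers). A Latin rectangle is a matrix over $[1,n]$ with no repeats in any row or column; its inner distance is the minimum of $\mathrm{dist}$ over symbols in horizontally or vertically adjacent cells. Two extended difference rows of Latin rows of inner distance $\frac n2-1$ (inner distance of a row being $\min_j\mathrm{dist}(s_j,s_{j+1})$) are neighbors if there exist Latin rows $r,r'$ with these extended difference rows such that the $2\times n$ matrix with rows $r$ and $r'$ is a Latin rectangle of inner distance $\frac n2-1$. *)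

From mathcomp Require Import all_boot all_order all_algebra.
Set Implicit Arguments. Unset Strict Implicit. Unset Printing Implicit Defensive.
Import Order.TTheory GRing.Theory Num.Theory.
Local Open Scope ring_scope.

(* Symbols are natural numbers in [1,n]; a row is a seq nat, s_j = nth 0 s (j-1). *)

Definition resid (n : nat) (a b : nat) : int := ((a%:Z - b%:Z) %% n%:Z)%Z.

Definition dist (n a b : nat) : nat := minn `|resid n a b|%N `|resid n b a|%N.

Definition latin_row (n : nat) (s : seq nat) : Prop := perm_eq s (iota 1 n).

Definition row_inner_dist (n : nat) (s : seq nat) : nat :=
  \big[minn/n]_(j < n.-1) dist n (nth 0%N s j) (nth 0%N s j.+1).

(* extended difference row (eps_1,...,eps_{n-1},h), as a seq int of length n:
   entry j (0-based) is h_{j+1} - n/2 with h_{j+1} = (s_{j+2} - s_{j+1}) mod n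
   for j < n-1, and h_n = (s_1 - s_n) mod n. *)
Definition ext_diff (n : nat) (s : seq nat) : seq int :=
  [seq resid n (nth 0%N s (j.+1 %% n)) (nth 0%N s j) - (n./2)%:Z | j <- iota 0 n].

Definition latin_rect2 (n : nat) (r r' : seq nat) : Prop :=
  latin_row n r /\ latin_row n r' /\
  (forall j, (j < n)%N -> nth 0%N r j != nth 0%N r' j).

Definition rect2_inner_dist (n : nat) (r r' : seq nat) : nat :=
  minn (minn (row_inner_dist n r) (row_inner_dist n r'))
       (\big[minn/n]_(j < n) dist n (nth 0%N r j) (nth 0%N r' j)).

Definition good_ext_row (n : nat) (d : seq int) : Prop :=
  exists s, latin_row n s /\ row_inner_dist n s = (n./2 - 1)%N /\ ext_diff n s = d.

Definition neighbors (n : nat) (d d' : seq int) : Prop :=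
  good_ext_row n d /\ good_ext_row n d' /\
  exists r r', ext_diff n r = d /\ ext_diff n r' = d' /\
    latin_rect2 n r r' /\ rect2_inner_dist n r r' = (n./2 - 1)%N.

From mathcomp Require Import all_boot all_order all_algebra zify.
(* Write n = 2m and call the offset of a step from a to b the centred residue
   ((b - a) mod n) - m, so that an extended difference row lists the offsets of
   the consecutive steps of its Latin row, the last step wrapping around.
   Symbols at distance at least m - 1 differ by m - 1, m or m + 1 modulo n,
   hence every horizontal step of r, r' and every vertical step c_j from r_j to
   r'_j has offset in {-1, 0, 1}.  Around a unit square of the rectangle the
   offsets cancel modulo n, and being small they cancel exactly:
   eps'_j - eps_j = c_(j+1) - c_j, so the sum telescopes to c_j2 - c_(j1-1).
   The wrap-around step is not constrained by the inner distance; its endpoints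
   are merely distinct, so |h|, |h'| <= m - 1 and h' - h = c_1 - c_n holds only
   modulo n.  The one other possibility, h' - h = +-(n - 2), forces
   h' = -h = +-(m - 1). *)

Set Implicit Arguments.
Unset Strict Implicit.
Unset Printing Implicit Defensive.

Import Order.TTheory GRing.Theory Num.Theory.
Local Open Scope ring_scope.

Lemma dvdz_norm_lt (d z : int) : (d %| z)%Z -> `|z| < `|d| -> z = 0.
Proof.
rewrite dvdzE => dvd_dz lt_zd; apply/eqP; rewrite -absz_eq0 -leqn0.
by apply: contraTT lt_zd; rewrite -ltnNge => /dvdn_leq/(_ dvd_dz); lia.
Qed.

Lemma bigmin_leq (I : eqType) (r : seq I) (b : nat) (F : I -> nat) i :
  i \in r -> (\big[minn/b]_(j <- r) F j <= F i)%N.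
Proof.
elim: r => // x r IHr; rewrite big_cons inE => /orP[/eqP<-|/IHr]; first exact: geq_minl.
exact: leq_trans (geq_minr _ _).
Qed.

Section Residues.
Variable n : nat.
Hypothesis n_gt0 : (0 < n)%N.

Lemma resid_ge0 a b : 0 <= resid n a b.
Proof. by apply: modz_ge0; rewrite eqz_nat -lt0n. Qed.

Lemma resid_lt a b : resid n a b < n%:Z.
Proof. exact: ltz_pmod. Qed.

Lemma dvdz_resid a b : (n %| resid n a b - (a%:Z - b%:Z))%Z.
Proof. by rewrite -eqz_mod_dvd modz_mod. Qed.

Lemma resid_add_swap a b :
  resid n a b + resid n b a = 0 \/ resid n a b + resid n b a = n%:Z.
Proof.
have [->|sum_neq0] := eqVneq (resid n a b + resid n b a) 0; [by left | right].
apply/eqP; rewrite -subr_eq0; apply/eqP/(@dvdz_norm_lt n).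
  have -> : resid n a b + resid n b a - n%:Z =
      (resid n a b - (a%:Z - b%:Z)) + (resid n b a - (b%:Z - a%:Z)) - n%:Z by lia.
  by apply: rpredB; [apply: rpredD; exact: dvdz_resid | exact: dvdzz].
have := resid_ge0 a b; have := resid_ge0 b a; have := resid_lt a b; have := resid_lt b a.
lia.
Qed.

Lemma resid_neq0 a b : (0 < a <= n)%N -> (0 < b <= n)%N -> a != b -> resid n a b != 0.
Proof.
move=> a_rng b_rng; apply: contra_neq => r0; have := dvdz_resid a b.
rewrite r0 sub0r rpredN => /dvdz_norm_lt ab0.
suff: a%:Z - b%:Z = 0 by lia.
by apply: ab0; lia.
Qed.

End Residues.

Definition offset (n a b : nat) : int := resid n b a - (n./2)%:Z.

Lemma ext_diffE n s j : (j < n)%N ->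
  nth 0 (ext_diff n s) j = offset n (nth 0%N s j) (nth 0%N s (j.+1 %% n)).
Proof. by move=> lt_jn; rewrite (nth_map 0%N) ?size_iota // nth_iota. Qed.

Lemma dvdz_offset_square n a b a' b' :
  (n %| (offset n a' b' - offset n a b) - (offset n b b' - offset n a a'))%Z.
Proof.
have -> : (offset n a' b' - offset n a b) - (offset n b b' - offset n a a') =
    (resid n b' a' - (b'%:Z - a'%:Z)) - (resid n b a - (b%:Z - a%:Z))
    - (resid n b' b - (b'%:Z - b%:Z)) + (resid n a' a - (a'%:Z - a%:Z)).
  by rewrite /offset; lia.
by apply: rpredD; [apply: rpredB; [apply: rpredB |] |]; exact: dvdz_resid.
Qed.

Lemma offset_square n a b a' b' : (5 <= n)%N ->
  `|offset n a b| <= 1 -> `|offset n a' b'| <= 1 ->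
  `|offset n a a'| <= 1 -> `|offset n b b'| <= 1 ->
  offset n a' b' - offset n a b = offset n b b' - offset n a a'.
Proof.
move=> n_ge5 ab a'b' aa' bb'; apply/eqP; rewrite -subr_eq0; apply/eqP.
by apply: (dvdz_norm_lt (dvdz_offset_square n a b a' b')); lia.
Qed.

Section EvenModulus.
Variable n : nat.
Hypothesis n_even : ~~ odd n.

Let n_double : n%:Z = 2 * (n./2)%:Z.
Proof. by have := odd_double_half n; rewrite (negbTE n_even) -muln2; lia. Qed.

Lemma offset_far a b : (4 <= n)%N -> (n./2 - 1 <= dist n a b)%N -> `|offset n a b| <= 1.
Proof.
move=> n_ge4; rewrite /dist leq_min => /andP[far_ab far_ba].
have n_gt0 : (0 < n)%N by lia.
have := resid_add_swap n_gt0 a b; have := resid_ge0 n_gt0 a b; have := resid_ge0 n_gt0 b a.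
have := resid_lt n_gt0 a b; have := resid_lt n_gt0 b a.
rewrite /offset; lia.
Qed.

Lemma offset_distinct_le a b : (0 < a <= n)%N -> (0 < b <= n)%N -> a != b ->
  `|offset n a b| <= (n./2)%:Z - 1.
Proof.
move=> a_rng b_rng neq_ab; have n_gt0 : (0 < n)%N by lia.
have := resid_neq0 n_gt0 b_rng a_rng; rewrite eq_sym => /(_ neq_ab).
have := resid_ge0 n_gt0 b a; have := resid_lt n_gt0 b a.
rewrite /offset; lia.
Qed.

Lemma congr_small_or_antipodal (x y e : int) : (n %| y - x - e)%Z ->
  `|x| <= (n./2)%:Z - 1 -> `|y| <= (n./2)%:Z - 1 -> `|e| <= 2 ->
  `|x - y| <= 2 \/ (`|x| = (n./2)%:Z - 1 /\ y = - x).
Proof.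
move=> dvd_n x_le y_le e_le.
have [small|] := ltrP `|y - x - e| `|n%:Z|; last by lia.
by have := dvdz_norm_lt dvd_n small; lia.
Qed.

End EvenModulus.

Lemma row_inner_dist_le n s j : (j.+1 < n)%N ->
  (row_inner_dist n s <= dist n (nth 0%N s j) (nth 0%N s j.+1))%N.
Proof.
move=> lt_jn; have lt_j : (j < n.-1)%N by lia.
exact: (bigmin_leq _ _ (mem_index_enum (Ordinal lt_j))).
Qed.

Lemma rect2_inner_dist_le_col n r r' j : (j < n)%N ->
  (rect2_inner_dist n r r' <= dist n (nth 0%N r j) (nth 0%N r' j))%N.
Proof.
move=> lt_jn; apply: leq_trans (geq_minr _ _) _.
exact: (bigmin_leq _ _ (mem_index_enum (Ordinal lt_jn))).
Qed.

Lemma rect2_inner_dist_le_rows n r r' :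
  (rect2_inner_dist n r r' <= row_inner_dist n r)%N /\
  (rect2_inner_dist n r r' <= row_inner_dist n r')%N.
Proof. by rewrite /rect2_inner_dist; split; lia. Qed.

Lemma latin_row_nth_range n s j : latin_row n s -> (j < n)%N -> (0 < nth 0%N s j <= n)%N.
Proof.
move=> s_latin lt_jn; have : nth 0%N s j \in s by rewrite mem_nth // (perm_size s_latin) size_iota.
by rewrite (perm_mem s_latin) mem_iota; lia.
Qed.

Lemma latin_row_nth_eq n s i j : latin_row n s -> (i < n)%N -> (j < n)%N ->
  (nth 0%N s i == nth 0%N s j) = (i == j).
Proof.
move=> s_latin lt_in lt_jn; have size_s : size s = n by rewrite (perm_size s_latin) size_iota.
by rewrite nth_uniq ?size_s // (perm_uniq s_latin) iota_uniq.
Qed.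

Lemma latin_row_wrap_offset n s : ~~ odd n -> (1 < n)%N -> latin_row n s ->
  `|offset n (nth 0%N s n.-1) (nth 0%N s 0)| <= (n./2)%:Z - 1.
Proof.
move=> n_even n_gt1 s_latin; apply: (offset_distinct_le n_even).
- by apply: latin_row_nth_range => //; lia.
- by apply: latin_row_nth_range => //; lia.
- by rewrite (latin_row_nth_eq s_latin) //; lia.
Qed.

Section Rectangle.
Variables (n : nat) (r r' : seq nat).
Hypotheses (n_ge6 : (6 <= n)%N) (n_even : ~~ odd n).
Hypotheses (r_latin : latin_row n r) (r'_latin : latin_row n r').
Hypothesis rect_far : (n./2 - 1 <= rect2_inner_dist n r r')%N.

Let col j := offset n (nth 0%N r j) (nth 0%N r' j).

Lemma col_offset_small j : (j < n)%N -> `|col j| <= 1.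
Proof.
move=> lt_jn; rewrite /col; apply: (offset_far n_even); first lia.
exact: leq_trans rect_far (rect2_inner_dist_le_col _ _ lt_jn).
Qed.

Lemma row_offset_small s j : (n./2 - 1 <= row_inner_dist n s)%N -> (j.+1 < n)%N ->
  `|offset n (nth 0%N s j) (nth 0%N s j.+1)| <= 1.
Proof.
move=> s_far lt_jn; apply: (offset_far n_even); first lia.
exact: leq_trans s_far (row_inner_dist_le _ lt_jn).
Qed.

Lemma ext_diff_sub j : (j.+1 < n)%N ->
  nth 0 (ext_diff n r') j - nth 0 (ext_diff n r) j = col j.+1 - col j.
Proof.
move=> lt_jn; have [r_far r'_far] := rect2_inner_dist_le_rows n r r'.
rewrite !ext_diffE ?modn_small //; try lia.
apply: offset_square; first lia.
- exact: row_offset_small (leq_trans rect_far r_far) lt_jn.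
- exact: row_offset_small (leq_trans rect_far r'_far) lt_jn.
- exact: col_offset_small (ltnW lt_jn).
- exact: col_offset_small lt_jn.
Qed.

Lemma ext_diff_sub_sum j1 j2 : (0 < j1 <= j2)%N -> (j2 < n)%N ->
  `|\sum_(j1.-1 <= j < j2) (nth 0 (ext_diff n r') j - nth 0 (ext_diff n r) j)| <= 2.
Proof.
move=> j12 lt_j2n.
rewrite (eq_big_nat _ _ (F2 := fun j => col j.+1 - col j)) => [|j /andP[_ lt_jj2]]; last first.
  by apply: ext_diff_sub; lia.
rewrite telescope_sumr; last lia.
by have := col_offset_small lt_j2n; have := @col_offset_small j1.-1; lia.
Qed.

Lemma ext_diff_last (h := nth 0 (ext_diff n r) n.-1) (h' := nth 0 (ext_diff n r') n.-1) :
  `|h - h'| <= 2 \/ (`|h| = (n./2 - 1)%N%:Z /\ h' = - h).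
Proof.
have lt_n1 : (n.-1 < n)%N by lia.
have n_gt1 : (1 < n)%N by lia.
have wrap : (n.-1.+1 %% n = 0)%N by rewrite prednK ?modnn //; lia.
rewrite /h /h' !ext_diffE // wrap.
have col_close : `|col 0 - col n.-1| <= 2.
  by have := col_offset_small lt_n1; have := @col_offset_small 0; lia.
have [close|[h_eq ->]] := congr_small_or_antipodal n_even (dvdz_offset_square n _ _ _ _)
  (latin_row_wrap_offset n_even n_gt1 r_latin) (latin_row_wrap_offset n_even n_gt1 r'_latin)
  col_close.
  by left.
by right; split; lia.
Qed.

End Rectangle.

Theorem mainTheorem16 (n : nat) (d d' : seq int) :
  (6 <= n)%N -> ~~ odd n -> neighbors n d d' -> d != d' ->
  (forall j1 j2 : nat, (1 <= j1)%N -> (j1 <= j2)%N -> (j2 <= n - 1)%N ->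
     `| \sum_(j1.-1 <= j < j2) (nth 0 d' j - nth 0 d j) | <= 2) /\
  (`| nth 0 d (n.-1) - nth 0 d' (n.-1) | <= 2 \/
   (`| nth 0 d (n.-1) | = (n./2 - 1)%N%:Z /\ nth 0 d' (n.-1) = - nth 0 d (n.-1))).
Proof.
move=> n_ge6 n_even [_ [_ [r [r' [<- [<- [[r_latin [r'_latin _]] inner]]]]]]] _.
have rect_far : (n./2 - 1 <= rect2_inner_dist n r r')%N by rewrite inner.
split=> [j1 j2 j1_gt0 j12 j2_le|].
  by apply: ext_diff_sub_sum => //; lia.
exact: ext_diff_last.
Qed.
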